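(* Assume $\alpha>\beta+1$, $\beta\ge0$, $\theta>0$, and $\alpha-\beta-1<\frac{4\theta}{\beta+1}$. Let $\rho\in\mathbb R$ and let $w$ be the solution on $[0,\infty)$ of $L(w)+e^{w}=0$, $w(0)=\rho$, $w'(0)=0$, and let $w^*(s)=\ln\{\theta^{\beta+1}(\alpha-\beta-1)\}-\theta\ln s$, $s>0$. Then for every $R>0$, $w-w^*$ has infinitely many zeros on $(R,+\infty)$ and only finitely many zeros on $(0,R]$. In particular $w-w^*$ has infinitely many zeros on $(0,\infty)$.
   Context: $L(u)(r)=r^{-\gamma}(r^{\alpha}|u'(r)|^{\beta}u'(r))'$ and $\theta=\gamma+2+\beta-\alpha$. The function $w^*$ is a singular solution of $L(w)+e^w=0$ on $(0,\infty)$. *)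

From Stdlib Require Import Reals List.
From Coquelicot Require Import Coquelicot.
Open Scope R_scope.

Definition theta (alpha beta gamma : R) : R := gamma + 2 + beta - alpha.

(* The flux  r^alpha |u'(r)|^beta u'(r)  (for r > 0).  For beta >= 0,
   Rpower (Rabs d) beta * d equals |d|^beta d for every real d
   (when d = 0 both sides are 0). *)
Definition flux (alpha beta : R) (u : R -> R) (r : R) : R :=
  Rpower r alpha * (Rpower (Rabs (Derive u r)) beta * Derive u r).

(* w is a solution on [0,oo) of  L(w) + e^w = 0,  w(0) = rho,  w'(0) = 0,
   where L(u)(r) = r^{-gamma} (r^alpha |u'|^beta u')'.
   - w(0) = rho;
   - the right derivative of w at 0 exists and equals 0;
   - w is differentiable on (0,oo);
   - the flux r^alpha |w'|^beta w' is differentiable on (0,oo) and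
     r^{-gamma} (flux)'(r) + e^{w(r)} = 0 for r > 0. *)
Definition is_solution (alpha beta gamma rho : R) (w : R -> R) : Prop :=
  w 0 = rho /\
  filterlim (fun h => (w h - w 0) / h) (at_right 0) (locally 0) /\
  (forall r, 0 < r -> ex_derive w r) /\
  (forall r, 0 < r -> ex_derive (flux alpha beta w) r /\
     Rpower r (- gamma) * Derive (flux alpha beta w) r + exp (w r) = 0).

Definition wstar (alpha beta gamma : R) (s : R) : R :=
  ln (Rpower (theta alpha beta gamma) (beta + 1) * (alpha - beta - 1))
  - theta alpha beta gamma * ln s.

Definition finite_set (P : R -> Prop) : Prop :=
  exists l : list R, forall s, P s -> In s l.

(** The Emden-Fowler substitution  r = e^t,
      v(t) = w(e^t) - w*(e^t),   Q(t) = - r^alpha |w'|^beta w' (e^t) e^(-(alpha-beta-1) t),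
    turns the radial equation into the autonomous planar system
      v' = theta - Q^(1/m),   Q' = c (theta^m e^v - Q),   m = beta+1, c = alpha-beta-1,
    with the single equilibrium (0, theta^m), and zeros of w - w* become zeros of v.
    - A Lyapunov function E with E' = -c (Q^(1/m) - theta)(Q - theta^m) <= 0 gives
      a priori bounds; a Barbalat argument then yields (v, Q) -> equilibrium.
    - Near the equilibrium the slope (theta - Q^(1/m))/v obeys a Riccati inequality
      r' <= -eta (1 + r^2) between zeros of v exactly when c m < 4 theta; comparing
      with atan shows that v has zeros beyond every time (infinitely many zeros).
    - A backward Gronwall estimate shows the equilibrium is never reached, so zeros
      of v are isolated; since v < 0 near -oo (w is bounded at 0+ while w* blows up),
      only finitely many zeros lie in every (-oo, T] (finitely many zeros in (0, R]).
    The file develops general calculus and ODE lemmas first, then the planar system,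
    then the change of variables, and finally the theorem. *)

From Stdlib Require Import Reals Lra List Classical.
From Coquelicot Require Import Coquelicot.
Open Scope R_scope.

(** Derivative rules, restated with the derivative in the exact shape
    produced by pointwise operations so that they chain with [apply]. *)

Lemma D_ext (f : R -> R) (x a b : R) : is_derive f x a -> a = b -> is_derive f x b.
Proof. intros H ->; exact H. Qed.

Lemma D_plus (f g : R -> R) (x a b : R) : is_derive f x a -> is_derive g x b ->
  is_derive (fun t => f t + g t) x (a + b).
Proof. intros; now apply (is_derive_plus f g). Qed.

Lemma D_minus (f g : R -> R) (x a b : R) : is_derive f x a -> is_derive g x b ->
  is_derive (fun t => f t - g t) x (a - b).
Proof. intros; now apply (is_derive_minus f g). Qed.

Lemma D_opp (f : R -> R) (x a : R) : is_derive f x a -> is_derive (fun t => - f t) x (- a).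
Proof. intros; now apply (is_derive_opp f). Qed.

Lemma D_mult (f g : R -> R) (x a b : R) : is_derive f x a -> is_derive g x b ->
  is_derive (fun t => f t * g t) x (a * g x + f x * b).
Proof. intros. apply (is_derive_mult f g); auto. intros; apply Rmult_comm. Qed.

Lemma D_scal (f : R -> R) (x k a : R) : is_derive f x a ->
  is_derive (fun t => k * f t) x (k * a).
Proof. apply is_derive_scal. Qed.

Lemma D_comp (f g : R -> R) (x a b : R) : is_derive f (g x) a -> is_derive g x b ->
  is_derive (fun t => f (g t)) x (b * a).
Proof. intros; now apply (is_derive_comp f g). Qed.

Lemma D_const (k x : R) : is_derive (fun _ => k) x 0.
Proof. apply (is_derive_const k x). Qed.

Lemma D_id (x : R) : is_derive (fun t => t) x 1.
Proof. apply (is_derive_id x). Qed.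

Lemma D_exp (x : R) : is_derive exp x (exp x).
Proof. apply is_derive_exp. Qed.

Lemma D_rpow (x y : R) : 0 < x -> is_derive (fun t => Rpower t y) x (y * Rpower x (y - 1)).
Proof. intros; apply is_derive_Reals; now apply derivable_pt_lim_power. Qed.

Lemma D_atan (x : R) : is_derive atan x (/ (1 + x ^ 2)).
Proof. apply is_derive_Reals, derivable_pt_lim_atan. Qed.

Lemma D_cont (f : R -> R) (x a : R) : is_derive f x a -> continuity_pt f x.
Proof.
  intros H. apply continuity_pt_filterlim, (ex_derive_continuous f x). now exists a.
Qed.

Lemma exp_le x y : x <= y -> exp x <= exp y.
Proof.
  intros H; destruct (Rle_lt_or_eq_dec _ _ H) as [H'|<-];
    [apply Rlt_le, exp_increasing; auto | lra].
Qed.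

Lemma Rpower_pos x y : 0 < Rpower x y.
Proof. apply exp_pos. Qed.

Lemma Rpower_le_neg a b y : y <= 0 -> 0 < a <= b -> Rpower b y <= Rpower a y.
Proof.
  intros Hy [Ha Hab]. apply exp_le. pose proof (ln_le a b Ha Hab). nra.
Qed.

Lemma Rpower_inv_pow x m : 0 < x -> 0 < m -> Rpower (Rpower x m) (/ m) = x.
Proof. intros. rewrite Rpower_mult, Rinv_r by lra. now apply Rpower_1. Qed.

Lemma Rpower_pow_inv x m : 0 < x -> 0 < m -> Rpower (Rpower x (/ m)) m = x.
Proof. intros. rewrite Rpower_mult, Rinv_l by lra. now apply Rpower_1. Qed.

Lemma Rpower_plus1 x y : 0 < x -> Rpower x (y + 1) = Rpower x y * x.
Proof. intros. rewrite Rpower_plus, Rpower_1; auto. Qed.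

Lemma Rpower_exp t y : Rpower (exp t) y = exp (y * t).
Proof. unfold Rpower. now rewrite ln_exp. Qed.

Lemma Rpower_opp_mul x y : 0 < x -> Rpower x (- y) * Rpower x y = 1.
Proof. intros. rewrite <- Rpower_plus, Rplus_opp_l. now apply Rpower_O. Qed.

Lemma exp_gap_nonneg x : 0 <= exp x - 1 - x.
Proof. pose proof (exp_ineq1_le x). lra. Qed.

Lemma exp_gap_ge_abs x : Rabs x - 1 <= exp x - 1 - x.
Proof.
  destruct (Rle_dec 0 x).
  - rewrite Rabs_right by lra.
    replace (exp x) with (exp (x/2) * exp (x/2)) by (rewrite <- exp_plus; f_equal; field).
    pose proof (exp_ineq1_le (x/2)).
    assert ((1 + x/2) * (1 + x/2) <= exp (x/2) * exp (x/2)) by (apply Rmult_le_compat; lra).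
    assert (0 <= (1 - x/2) * (1 - x/2)) by apply Rle_0_sqr. lra.
  - rewrite Rabs_left by lra. pose proof (exp_pos x). lra.
Qed.

Lemma two_abs_mult_le a b : 2 * (Rabs a * Rabs b) <= a * a + b * b.
Proof.
  assert (Ha : a * a = Rabs a * Rabs a)
    by (rewrite <- Rabs_mult; symmetry; apply Rabs_pos_eq; nra).
  assert (Hb : b * b = Rabs b * Rabs b)
    by (rewrite <- Rabs_mult; symmetry; apply Rabs_pos_eq; nra).
  rewrite Ha, Hb.
  assert (0 <= (Rabs a - Rabs b) * (Rabs a - Rabs b)) by apply Rle_0_sqr. nra.
Qed.

Lemma opp_abs_mult_le a b : - (Rabs a * Rabs b) <= a * b.
Proof. rewrite <- Rabs_mult. pose proof (Rle_abs (- (a * b))). rewrite Rabs_Ropp in H. lra. Qed.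

Lemma mvt (f df : R -> R) a b : a <= b ->
  (forall x, a <= x <= b -> is_derive f x (df x)) ->
  exists c, a <= c <= b /\ f b - f a = df c * (b - a).
Proof.
  intros Hab Hd. destruct (MVT_gen f a b df) as [c [Hc Heq]].
  - intros x Hx. rewrite Rmin_left, Rmax_right in Hx by lra. apply Hd; lra.
  - intros x Hx. rewrite Rmin_left, Rmax_right in Hx by lra.
    apply (D_cont f x (df x)), Hd; lra.
  - exists c. rewrite Rmin_left, Rmax_right in Hc by lra. auto.
Qed.

Lemma mvt2 (f df : R -> R) a b :
  (forall x, Rmin a b <= x <= Rmax a b -> is_derive f x (df x)) ->
  exists c, Rmin a b <= c <= Rmax a b /\ f b - f a = df c * (b - a).
Proof.
  intros Hd. destruct (Rle_dec a b) as [H|H].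
  - rewrite Rmin_left, Rmax_right in * by lra. now apply mvt.
  - rewrite Rmin_right, Rmax_left in * by lra.
    destruct (mvt f df b a) as [c [Hc He]]; try lra; auto.
    exists c; split; auto. lra.
Qed.

Lemma mono_le (f df : R -> R) a b : a <= b ->
  (forall x, a <= x <= b -> is_derive f x (df x)) ->
  (forall x, a <= x <= b -> 0 <= df x) -> f a <= f b.
Proof.
  intros Hab Hd Hp. destruct (mvt f df a b Hab Hd) as [c [Hc He]].
  specialize (Hp c Hc). nra.
Qed.

Lemma anti_le (f df : R -> R) a b : a <= b ->
  (forall x, a <= x <= b -> is_derive f x (df x)) ->
  (forall x, a <= x <= b -> df x <= 0) -> f b <= f a.
Proof.
  intros Hab Hd Hp. destruct (mvt f df a b Hab Hd) as [c [Hc He]].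
  specialize (Hp c Hc). nra.
Qed.

Lemma mono_lt (f df : R -> R) a b : a < b ->
  (forall x, a <= x <= b -> is_derive f x (df x)) ->
  (forall x, a <= x <= b -> 0 < df x) -> f a < f b.
Proof.
  intros Hab Hd Hp. destruct (mvt f df a b (Rlt_le _ _ Hab) Hd) as [c [Hc He]].
  specialize (Hp c Hc). nra.
Qed.

Lemma cont_eps (f : R -> R) x : continuity_pt f x -> forall eps, 0 < eps ->
  exists delta, 0 < delta /\ forall y, Rabs (y - x) < delta -> Rabs (f y - f x) < eps.
Proof.
  intros H eps Heps. apply continuity_pt_filterlim in H.
  destruct (proj1 (filterlim_locally f (f x)) H (mkposreal eps Heps)) as [d Hd].
  exists d; split; [apply cond_pos|]. intros y Hy. apply (Hd y). exact Hy.
Qed.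

Lemma eventual_sign (f : R -> R) T eta : continuity f ->
  (forall t, T <= t -> eta <= Rabs (f t)) -> 0 < eta ->
  (forall t, T <= t -> eta <= f t) \/ (forall t, T <= t -> f t <= - eta).
Proof.
  intros Hc Hf Heta.
  assert (Hnz : forall t, T <= t -> f t <> 0).
  { intros t Ht H0. specialize (Hf t Ht). rewrite H0, Rabs_R0 in Hf. lra. }
  assert (Hsame : forall t, T <= t -> 0 < f T * f t).
  { intros t Ht. apply Rnot_le_lt; intros Hle.
    destruct (IVT_gen f T t 0 Hc) as [x [Hx Hfx]].
    - destruct (Rlt_or_le 0 (f T)).
      + assert (f t <= 0) by nra.
        split; [pose proof (Rmin_r (f T) (f t))|pose proof (Rmax_l (f T) (f t))]; lra.
      + assert (0 <= f t) by (pose proof (Hnz T (Rle_refl T)); nra).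
        split; [pose proof (Rmin_l (f T) (f t))|pose proof (Rmax_r (f T) (f t))]; lra.
    - rewrite Rmin_left, Rmax_right in Hx by lra. exact (Hnz x ltac:(lra) Hfx). }
  destruct (Rlt_or_le 0 (f T)) as [Hp|Hn]; [left|right]; intros t Ht;
    specialize (Hf t Ht); specialize (Hsame t Ht).
  - assert (0 < f t) by nra. rewrite Rabs_right in Hf; lra.
  - assert (f t < 0) by nra. rewrite Rabs_left in Hf; lra.
Qed.

Lemma inf_exists (S : R -> Prop) lb x0 : (forall x, S x -> lb <= x) -> S x0 ->
  exists s, (forall x, S x -> s <= x) /\ (forall e, 0 < e -> exists x, S x /\ x < s + e).
Proof.
  intros Hlb Hx0. set (S' := fun y => S (- y)).
  assert (Hb : bound S'). { exists (- lb). intros y Hy. specialize (Hlb _ Hy). lra. }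
  assert (Hne : exists y, S' y). { exists (- x0). unfold S'. now rewrite Ropp_involutive. }
  destruct (completeness S' Hb Hne) as [M [HM1 HM2]].
  exists (- M). split.
  - intros x Hx. assert (- x <= M); [|lra]. apply HM1. unfold S'. now rewrite Ropp_involutive.
  - intros e He. apply NNPP; intros Hn.
    assert (M <= M - e); [|lra]. apply HM2. intros y Hy.
    destruct (Rle_dec y (M - e)); auto. exfalso; apply Hn. exists (- y); split; auto. lra.
Qed.

Lemma inf_nonneg_fun (E : R -> R) : (forall t, 0 <= E t) ->
  exists L, 0 <= L /\ (forall t, 0 <= t -> L <= E t) /\
    (forall eps, 0 < eps -> exists T, 0 <= T /\ E T < L + eps).
Proof.
  intros HE.
  destruct (inf_exists (fun y => exists t, 0 <= t /\ y = E t) 0 (E 0))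
    as [L [HL1 HL2]].
  - intros y [t [_ ->]]. apply HE.
  - exists 0; split; [lra|auto].
  - exists L; split; [|split].
    + destruct (Rle_or_lt 0 L) as [|Hneg]; auto.
      destruct (HL2 (- L) ltac:(lra)) as [y [[t [_ ->]] Hy]]. specialize (HE t). lra.
    + intros t Ht. apply HL1. exists t; auto.
    + intros eps Heps. destruct (HL2 eps Heps) as [y [[t [Ht ->]] Hy]]. exists t; auto.
Qed.

Lemma linear_gain (f df : R -> R) T s k : 0 <= s ->
  (forall t, T <= t <= T + s -> is_derive f t (df t)) ->
  (forall t, T <= t <= T + s -> k <= df t) -> f T + k * s <= f (T + s).
Proof.
  intros Hs Hd Hk.
  assert (f T - k * T <= f (T + s) - k * (T + s)); [|lra].
  apply (mono_le (fun t => f t - k * t) (fun t => df t - k * 1)); [lra| |].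
  - intros t Ht. apply D_minus; [apply Hd; lra|apply D_scal, D_id].
  - intros t Ht. specialize (Hk t Ht). lra.
Qed.

Lemma power_gap x y m : 0 < x -> 0 < y -> 1 <= m ->
  m * Rpower (Rmin x y) (m - 1) * ((x - y) * (x - y)) <= (x - y) * (Rpower x m - Rpower y m).
Proof.
  intros Hx Hy Hm.
  assert (Hmin : 0 < Rmin x y) by (apply Rmin_case; lra).
  destruct (mvt2 (fun z => Rpower z m) (fun z => m * Rpower z (m - 1)) y x) as [xi [Hxi Heq]].
  { intros z Hz. apply D_rpow. rewrite Rmin_comm in Hz. lra. }
  rewrite (Rmin_comm y x) in Hxi. rewrite Heq.
  assert (Rpower (Rmin x y) (m - 1) <= Rpower xi (m - 1)) by (apply Rle_Rpower_l; lra).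
  pose proof (Rle_0_sqr (x - y)). unfold Rsqr in *.
  assert (0 <= m * (Rpower xi (m - 1) - Rpower (Rmin x y) (m - 1)) * ((x - y) * (x - y)))
    by (apply Rmult_le_pos; [apply Rmult_le_pos|]; lra).
  nra.
Qed.

(* Near [0], [exp] is Lipschitz with constant [exp 1 <= 3]. *)
Lemma exp_sub1_bound x : Rabs x < 1 -> Rabs (exp x - 1) <= 3 * Rabs x.
Proof.
  intros Hx. apply Rabs_lt_between in Hx.
  destruct (mvt2 exp exp 0 x) as [z [Hz Heq]]; [intros; apply D_exp|].
  rewrite exp_0, Rminus_0_r in Heq. rewrite Heq, Rabs_mult, (Rabs_pos_eq (exp z))
    by (apply Rlt_le, exp_pos).
  apply Rmult_le_compat_r; [apply Rabs_pos|].
  assert (z <= 1) by (assert (Rmax 0 x <= 1) by (apply Rmax_case; lra); lra).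
  pose proof (exp_le z 1 H). pose proof exp_le_3. lra.
Qed.

Lemma zero_at_left_end (f : R -> R) s u : s <= u -> continuity_pt f s ->
  (forall y, s < y <= u -> f y = 0) -> f u = 0 -> f s = 0.
Proof.
  intros Hsu Hc Hz Hu. destruct (Req_dec s u) as [->|Hne]; auto.
  apply NNPP; intros Hn.
  destruct (cont_eps f s Hc (Rabs (f s)) (Rabs_pos_lt _ Hn)) as [d [Hd Hd']].
  set (y := Rmin (s + d / 2) u).
  assert (s < y <= u /\ y <= s + d / 2) as [Hy Hyd].
  { unfold y. pose proof (Rmin_l (s + d / 2) u). pose proof (Rmin_r (s + d / 2) u).
    split; [split|]; try lra. apply Rmin_case; lra. }
  specialize (Hd' y ltac:(apply Rabs_lt_between; lra)).
  rewrite (Hz y Hy), Rminus_0_l, Rabs_Ropp in Hd'. lra.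
Qed.

Lemma barbalat (E dE phi dphi : R -> R) kappa M : 0 < kappa -> 0 < M ->
  (forall t, 0 <= E t) -> (forall t, 0 <= t -> is_derive E t (dE t)) ->
  (forall t, 0 <= t -> dE t <= - kappa * phi t) -> (forall t, 0 <= phi t) ->
  (forall t, 0 <= t -> is_derive phi t (dphi t)) ->
  (forall t, 0 <= t -> Rabs (dphi t) <= M) ->
  forall eps, 0 < eps -> exists T, 0 <= T /\ forall t, T <= t -> phi t < eps.
Proof.
  intros Hk HM HE0 HE HdE Hphi0 Hphi HdM eps Heps.
  destruct (inf_nonneg_fun E HE0) as [L [HL0 [HL1 HL2]]].
  set (d := eps / (2 * M)).
  assert (Hd : 0 < d) by (unfold d; apply Rdiv_lt_0_compat; lra).
  destruct (HL2 (kappa * eps * d / 2)) as [T [HT0 HT]].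
  { apply Rdiv_lt_0_compat; [|lra]. apply Rmult_lt_0_compat; [nra|auto]. }
  exists T; split; auto. intros t Ht. apply Rnot_le_lt; intros Hpt.
  (* [phi] stays above [eps/2] on [t, t + d], so [E] drops by [kappa eps d / 2]. *)
  assert (Hlow : forall s, t <= s <= t + d -> eps / 2 <= phi s).
  { intros s Hs. destruct (mvt phi dphi t s) as [xi [Hxi Heq]]; try lra.
    - intros x Hx; apply Hphi; lra.
    - specialize (HdM xi ltac:(lra)). apply Rabs_le_between in HdM.
      assert (M * d = eps / 2) by (unfold d; field; lra).
      assert (dphi xi * (s - t) >= - M * (s - t)) by nra. nra. }
  assert (Hdrop : E (t + d) <= E t - kappa * (eps / 2) * d).
  { destruct (mvt E dE t (t + d)) as [xi [Hxi Heq]]; try lra.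
    - intros x Hx; apply HE; lra.
    - specialize (HdE xi ltac:(lra)). specialize (Hlow xi Hxi).
      assert (dE xi <= - kappa * (eps / 2)) by nra.
      replace (t + d - t) with d in Heq by ring. nra. }
  assert (Hmono : E t <= E T).
  { apply (anti_le E dE T t); auto.
    - intros; apply HE; lra.
    - intros x Hx. specialize (HdE x ltac:(lra)). specialize (Hphi0 x). nra. }
  specialize (HL1 (t + d) ltac:(lra)).
  assert (kappa * (eps / 2) * d = kappa * eps * d / 2) by field. lra.
Qed.

(* Comparison with [atan]: no function satisfies the Riccati inequality
   [r' <= - eta (1 + r^2)] on an interval of length [PI / eta]. *)
Lemma riccati_no_long_interval (r dr : R -> R) eta T : 0 < eta ->
  (forall t, T <= t <= T + PI / eta ->
     is_derive r t (dr t) /\ dr t <= - eta * (1 + r t * r t)) -> False.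
Proof.
  intros Heta Hr. set (Lp := PI / eta).
  assert (HLp : 0 < Lp) by (unfold Lp; apply Rdiv_lt_0_compat; [apply PI_RGT_0|lra]).
  assert (Hh : atan (r (T + Lp)) + eta * (T + Lp) <= atan (r T) + eta * T).
  { apply (anti_le (fun s => atan (r s) + eta * s)
      (fun s => dr s * / (1 + r s ^ 2) + eta * 1)); [lra| |].
    - intros x Hx. apply D_plus; [|apply D_scal, D_id].
      apply (D_comp atan r); [apply D_atan|apply Hr; exact Hx].
    - intros x Hx. destruct (Hr x Hx) as [_ Hle].
      assert (Hpos : 0 < 1 + r x ^ 2) by (pose proof (Rle_0_sqr (r x)); unfold Rsqr in *; simpl; lra).
      assert (dr x * / (1 + r x ^ 2) <= - eta); [|lra].
      apply Rmult_le_reg_r with (1 + r x ^ 2); auto.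
      rewrite Rmult_assoc, Rinv_l by lra. simpl in *. nra. }
  assert (eta * Lp = PI) by (unfold Lp; field; lra).
  pose proof (atan_bound (r (T + Lp))). pose proof (atan_bound (r T)). lra.
Qed.

Lemma backward_gronwall (G dG : R -> R) M a b : a <= b ->
  (forall x, a <= x <= b -> is_derive G x (dG x)) ->
  (forall x, a <= x <= b -> 0 <= G x /\ 0 <= dG x + M * G x) ->
  G b = 0 -> forall x, a <= x <= b -> G x = 0.
Proof.
  intros Hab Hd Hp Hb x Hx.
  assert (HG : G x * exp (M * x) <= G b * exp (M * b)).
  { apply (mono_le (fun y => G y * exp (M * y)) (fun y => (dG y + M * G y) * exp (M * y)));
      [lra| |].
    - intros y Hy. eapply D_ext.
      + apply D_mult; [apply Hd; lra|].
        apply (D_comp exp (fun s => M * s)); [apply D_exp|apply D_scal, D_id].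
      + cbv beta; ring.
    - intros y Hy. apply Rmult_le_pos; [apply Hp; lra|apply Rlt_le, exp_pos]. }
  rewrite Hb, Rmult_0_l in HG. pose proof (exp_pos (M * x)).
  destruct (Hp x Hx) as [HGx _]. nra.
Qed.

(* The discriminant estimate behind the Riccati inequality: under the
   oscillation condition [c^2 < 4 B], the quadratic
   [(1 - eta) r^2 + a r + (b - eta)] stays non-negative for [a ~ c], [b ~ B]. *)
Lemma quadratic_nonneg B c eta a b r : 0 < B -> 0 < c -> 0 < eta <= 1/2 ->
  eta * (8 * B + 4 + 3 * (c * c)) <= 4 * B - c * c ->
  0 <= a <= c * (1 + eta) -> B * (1 - eta) <= b ->
  0 <= (1 - eta) * (r * r) + a * r + (b - eta).
Proof.
  intros HB Hc He Hcond Ha Hb.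
  assert (Ha2 : a * a <= c * c + 3 * (c * c) * eta).
  { assert (a * a <= (c * (1 + eta)) * (c * (1 + eta))) by (apply Rmult_le_compat; lra). nra. }
  assert (H4 : a * a <= 4 * (1 - eta) * (b - eta)) by nra.
  assert (Hid : 4 * (1 - eta) * ((1 - eta) * (r * r) + a * r + (b - eta)) =
     (2 * (1 - eta) * r + a) * (2 * (1 - eta) * r + a) + (4 * (1 - eta) * (b - eta) - a * a))
    by ring.
  pose proof (Rle_0_sqr (2 * (1 - eta) * r + a)). unfold Rsqr in *. nra.
Qed.

(* The energy estimate behind backward uniqueness at the equilibrium: with
   [a = v], [b = Q - qstar], [p = th - Q^(1/m)], [e = e^v - 1], the derivative
   of [a^2 + b^2] is bounded below by [- M (a^2 + b^2)]. *)
Lemma energy_estimate a b p e L c q : 0 < c -> 0 < q -> 0 <= L ->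
  Rabs p <= L * Rabs b -> Rabs e <= 3 * Rabs a ->
  0 <= 2 * a * p + 2 * b * (c * (q * e - b)) + (L + 3 * c * q + 2 * c) * (a * a + b * b).
Proof.
  intros Hc Hq HL Hp He.
  pose proof (opp_abs_mult_le a p). pose proof (opp_abs_mult_le b e).
  pose proof (two_abs_mult_le a b).
  assert (Rabs a * Rabs p <= Rabs a * (L * Rabs b)) by (apply Rmult_le_compat_l; [apply Rabs_pos|auto]).
  assert (Rabs b * Rabs e <= Rabs b * (3 * Rabs a)) by (apply Rmult_le_compat_l; [apply Rabs_pos|auto]).
  pose proof (Rle_0_sqr a). pose proof (Rle_0_sqr b). unfold Rsqr in *.
  assert (2 * a * p >= - L * (a * a + b * b)) by nra.
  assert (Hbe : b * e >= - (3/2) * (a * a + b * b)) by lra.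
  assert (c * q * (b * e) >= c * q * (- (3/2) * (a * a + b * b))).
  { apply Rmult_ge_compat_l; [apply Rle_ge, Rmult_le_pos; lra|auto]. }
  assert (2 * b * (c * (q * e - b)) >= - 3 * c * q * (a * a + b * b) - 2 * c * (b * b)) by nra.
  assert (0 <= c * (a * a)) by (apply Rmult_le_pos; lra). lra.
Qed.

(** * The planar system *)

Section PlanarSystem.

Variables th c m : R.
Hypothesis Hth : 0 < th.
Hypothesis Hc : 0 < c.
Hypothesis Hm : 1 <= m.
Variables v Q : R -> R.
Hypothesis HQ : forall t, 0 < Q t.

Definition qstar := Rpower th m.
Definition proot t := Rpower (Q t) (/ m).

Hypothesis Hv : forall t, is_derive v t (th - proot t).
Hypothesis HQd : forall t, is_derive Q t (c * (qstar * exp (v t) - Q t)).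

Lemma qstar_pos : 0 < qstar.
Proof. apply Rpower_pos. Qed.

Lemma proot_pos t : 0 < proot t.
Proof. apply Rpower_pos. Qed.

Lemma proot_pow t : Rpower (proot t) m = Q t.
Proof. apply Rpower_pow_inv; auto; lra. Qed.

Lemma qstar_root : Rpower qstar (/ m) = th.
Proof. apply Rpower_inv_pow; lra. Qed.

Definition dproot t := / m * Rpower (Q t) (/ m - 1) * (c * (qstar * exp (v t) - Q t)).

Lemma proot_deriv t : is_derive proot t (dproot t).
Proof.
  unfold proot, dproot. eapply D_ext.
  - apply (D_comp (fun x => Rpower x (/m)) Q); [apply D_rpow, HQ|apply HQd].
  - ring.
Qed.

Lemma v_cont t : continuity_pt v t.
Proof. exact (D_cont _ _ _ (Hv t)). Qed.

Lemma Q_cont t : continuity_pt Q t.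
Proof. exact (D_cont _ _ _ (HQd t)). Qed.

(* [Q |-> Q^(1/m)] is increasing, so [proot - th] has the sign of [Q - qstar]. *)
Lemma proot_ge_th t : qstar <= Q t -> th <= proot t.
Proof.
  intros H. rewrite <- qstar_root. apply Rle_Rpower_l.
  - apply Rlt_le, Rinv_0_lt_compat; lra.
  - split; [apply qstar_pos|auto].
Qed.

Lemma proot_le_th t : Q t <= qstar -> proot t <= th.
Proof.
  intros H. rewrite <- qstar_root. apply Rle_Rpower_l.
  - apply Rlt_le, Rinv_0_lt_compat; lra.
  - split; [apply HQ|auto].
Qed.

(** ** The Lyapunov function
    [lyap = c qstar (e^v - 1 - v) + qpot(Q)], where [qpot' = Q^(1/m) - th], [qpot(qstar) = 0]. *)

Definition qpot x := m / (m + 1) * Rpower x ((m + 1) / m) - th * x + th * qstar / (m + 1).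

Lemma qpot_deriv x : 0 < x -> is_derive qpot x (Rpower x (/ m) - th).
Proof.
  intros Hx. unfold qpot. eapply D_ext.
  - apply D_plus; [apply D_minus|apply D_const].
    + apply D_scal, D_rpow; auto.
    + apply D_scal, D_id.
  - replace ((m + 1) / m - 1) with (/ m) by (field; lra). field; lra.
Qed.

Lemma qpot_qstar : qpot qstar = 0.
Proof.
  unfold qpot, qstar. rewrite Rpower_mult.
  replace (m * ((m + 1) / m)) with (m + 1) by (field; lra).
  rewrite Rpower_plus1 by lra. field; lra.
Qed.

(* [qpot] is convex with minimum [0] at [qstar]. *)
Lemma qpot_nonneg x : 0 < x -> 0 <= qpot x.
Proof.
  intros Hx. rewrite <- qpot_qstar. pose proof qstar_pos.
  assert (Hinv : 0 <= / m) by (apply Rlt_le, Rinv_0_lt_compat; lra).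
  destruct (Rle_dec qstar x) as [H1|H1].
  - apply (mono_le qpot (fun y => Rpower y (/m) - th)); auto.
    + intros y Hy; apply qpot_deriv; lra.
    + intros y Hy. rewrite <- qstar_root.
      assert (Rpower qstar (/m) <= Rpower y (/m)) by (apply Rle_Rpower_l; lra). lra.
  - apply (anti_le qpot (fun y => Rpower y (/m) - th)); try lra.
    + intros y Hy; apply qpot_deriv; lra.
    + intros y Hy. rewrite <- qstar_root.
      assert (Rpower y (/m) <= Rpower qstar (/m)) by (apply Rle_Rpower_l; lra). lra.
Qed.

Lemma qpot_linear_growth x : Rpower (2 * th) m <= x -> th * (x - Rpower (2 * th) m) <= qpot x.
Proof.
  set (x1 := Rpower (2 * th) m). intros Hx.
  assert (Hx1 : 0 < x1) by apply Rpower_pos.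
  assert (qpot x1 - th * (x1 - x1) <= qpot x - th * (x - x1)); [|pose proof (qpot_nonneg x1 Hx1); lra].
  apply (mono_le (fun x => qpot x - th * (x - x1)) (fun x => Rpower x (/m) - th - th * (1 - 0)));
    [lra| |].
  - intros y Hy. apply D_minus; [apply qpot_deriv; lra|].
    apply D_scal, D_minus; [apply D_id|apply D_const].
  - intros y Hy. assert (2 * th <= Rpower y (/m)); [|lra].
    replace (2 * th) with (Rpower x1 (/m)) by (apply Rpower_inv_pow; lra).
    apply Rle_Rpower_l; [apply Rlt_le, Rinv_0_lt_compat|]; lra.
Qed.

Definition lyap t := c * qstar * (exp (v t) - 1 - v t) + qpot (Q t).
Definition dissip t := (proot t - th) * (Q t - qstar).

Lemma lyap_deriv t : is_derive lyap t (- c * dissip t).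
Proof.
  unfold lyap. eapply D_ext.
  - apply D_plus.
    + apply D_scal. apply D_minus; [apply D_minus|apply Hv].
      * apply (D_comp exp v); [apply D_exp|apply Hv].
      * apply D_const.
    + apply (D_comp qpot Q); [apply qpot_deriv, HQ|apply HQd].
  - unfold dissip, proot. ring.
Qed.

Lemma dissip_nonneg t : 0 <= dissip t.
Proof.
  unfold dissip. destruct (Rle_dec qstar (Q t)).
  - pose proof (proot_ge_th t r). nra.
  - assert (Q t <= qstar) by lra. pose proof (proot_le_th t H). nra.
Qed.

Lemma lyap_decr t s : t <= s -> lyap s <= lyap t.
Proof.
  intros H. apply (anti_le lyap (fun x => - c * dissip x)); auto.
  - intros; apply lyap_deriv.
  - intros x _. pose proof (dissip_nonneg x). nra.
Qed.

Lemma lyap_nonneg t : 0 <= lyap t.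
Proof.
  unfold lyap. pose proof (exp_gap_nonneg (v t)). pose proof (qpot_nonneg _ (HQ t)).
  pose proof qstar_pos. apply Rplus_le_le_0_compat; auto.
  apply Rmult_le_pos; [nra|auto].
Qed.

(** ** A priori bounds on [0, oo) *)

Lemma v_bounded : exists B, 0 <= B /\ forall t, 0 <= t -> Rabs (v t) <= B.
Proof.
  pose proof qstar_pos. set (B := 1 + lyap 0 / (c * qstar)).
  assert (HB : 0 <= B).
  { unfold B. pose proof (lyap_nonneg 0).
    assert (0 <= lyap 0 / (c * qstar)) by (apply Rdiv_le_0_compat; nra). lra. }
  exists B; split; auto. intros t Ht.
  pose proof (lyap_decr 0 t Ht). pose proof (qpot_nonneg _ (HQ t)).
  pose proof (exp_gap_ge_abs (v t)).
  assert (c * qstar * (exp (v t) - 1 - v t) <= lyap 0) by (unfold lyap in *; lra).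
  assert (Rabs (v t) - 1 <= lyap 0 / (c * qstar)); [|unfold B; lra].
  apply Rmult_le_reg_l with (c * qstar); [nra|].
  replace (c * qstar * (lyap 0 / (c * qstar))) with (lyap 0) by (field; nra).
  assert (c * qstar * (Rabs (v t) - 1) <= c * qstar * (exp (v t) - 1 - v t))
    by (apply Rmult_le_compat_l; nra).
  lra.
Qed.

Lemma Q_bounded_above : exists B, forall t, 0 <= t -> Q t <= B.
Proof.
  set (x1 := Rpower (2 * th) m).
  exists (x1 + lyap 0 / th). intros t Ht.
  assert (0 <= lyap 0 / th) by (apply Rdiv_le_0_compat; [apply lyap_nonneg|lra]).
  destruct (Rle_dec (Q t) x1); [lra|].
  pose proof (qpot_linear_growth (Q t) ltac:(unfold x1 in *; lra)).
  pose proof (lyap_decr 0 t Ht). pose proof (exp_gap_nonneg (v t)). pose proof qstar_pos.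
  assert (qpot (Q t) <= lyap t).
  { unfold lyap. assert (0 <= c * qstar * (exp (v t) - 1 - v t)) by (apply Rmult_le_pos; nra). lra. }
  assert (Q t - x1 <= lyap 0 / th); [|lra].
  apply Rmult_le_reg_l with th; auto.
  replace (th * (lyap 0 / th)) with (lyap 0) by (field; lra). fold x1 in H0. lra.
Qed.

(* Since [v] is bounded, [Q' >= c (mu - Q)] with [mu = qstar e^(-B) > 0]. *)
Lemma Q_bounded_below : exists b, 0 < b /\ forall t, 0 <= t -> b <= Q t.
Proof.
  destruct v_bounded as [B [HB HvB]].
  set (mu := qstar * exp (- B)).
  assert (Hmu : 0 < mu) by (pose proof qstar_pos; pose proof (exp_pos (- B)); unfold mu; nra).
  exists (Rmin (Q 0) mu). split; [apply Rmin_case; auto|]. intros t Ht.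
  assert (H : (Q 0 - mu) * exp (c * 0) <= (Q t - mu) * exp (c * t)).
  { apply (mono_le (fun s => (Q s - mu) * exp (c * s))
      (fun s => c * exp (c * s) * (qstar * exp (v s) - mu))); auto.
    - intros y Hy. eapply D_ext.
      + apply D_mult; [apply D_minus; [apply HQd|apply D_const]|].
        apply (D_comp exp (fun s => c * s)); [apply D_exp|apply D_scal, D_id].
      + cbv beta; ring.
    - intros y Hy. pose proof (HvB y (proj1 Hy)) as Hb. apply Rabs_le_between in Hb.
      assert (exp (- B) <= exp (v y)) by (apply exp_le; lra).
      pose proof (exp_pos (c * y)). pose proof qstar_pos. unfold mu.
      apply Rmult_le_pos; nra. }
  rewrite Rmult_0_r, exp_0, Rmult_1_r in H.
  assert (1 <= exp (c * t)) by (rewrite <- exp_0; apply exp_le; nra).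
  destruct (Rle_dec mu (Q 0)).
  - rewrite Rmin_right by lra. nra.
  - rewrite Rmin_left by lra. nra.
Qed.

Lemma proot_bounded : exists lo hi, 0 < lo /\ forall t, 0 <= t -> lo <= proot t <= hi.
Proof.
  destruct Q_bounded_below as [b [Hb Hlow]]. destruct Q_bounded_above as [B Hup].
  exists (Rpower b (/ m)), (Rpower B (/ m)). split; [apply Rpower_pos|]. intros t Ht.
  specialize (Hlow t Ht). specialize (Hup t Ht).
  assert (0 <= / m) by (apply Rlt_le, Rinv_0_lt_compat; lra).
  unfold proot. split; apply Rle_Rpower_l; auto; lra.
Qed.

(** ** Convergence to the equilibrium as [t -> oo] *)

Lemma dissip_coercive : exists k, 0 < k /\
  forall t, 0 <= t -> k * ((proot t - th) * (proot t - th)) <= dissip t.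
Proof.
  destruct proot_bounded as [lo [hi [Hlo Hb]]].
  set (k := m * Rpower (Rmin lo th) (m - 1)).
  assert (Hk : 0 < k) by (unfold k; pose proof (Rpower_pos (Rmin lo th) (m - 1)); nra).
  exists k; split; auto. intros t Ht. destruct (Hb t Ht) as [Hl _].
  pose proof (power_gap (proot t) th m (proot_pos t) Hth Hm) as Hgap.
  rewrite proot_pow in Hgap. fold qstar in Hgap.
  assert (Rpower (Rmin lo th) (m - 1) <= Rpower (Rmin (proot t) th) (m - 1)).
  { apply Rle_Rpower_l; [lra|]. split; [apply Rmin_case; lra|].
    apply Rmin_glb; [pose proof (Rmin_l lo th); lra|apply Rmin_r]. }
  pose proof (Rle_0_sqr (proot t - th)). unfold Rsqr in *.
  assert (k * ((proot t - th) * (proot t - th)) <=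
          m * Rpower (Rmin (proot t) th) (m - 1) * ((proot t - th) * (proot t - th)))
    by (apply Rmult_le_compat_r; [auto|unfold k; apply Rmult_le_compat_l; lra]).
  unfold dissip. lra.
Qed.

Lemma dproot_bounded : exists M, 0 < M /\ forall t, 0 <= t -> Rabs (dproot t) <= M.
Proof.
  destruct v_bounded as [B [HB HvB]]. destruct Q_bounded_below as [b [Hb Hlow]].
  destruct Q_bounded_above as [BQ HQup]. pose proof qstar_pos.
  set (M0 := / m * Rpower b (/ m - 1) * (c * (qstar * exp B + BQ))).
  assert (Hinv : 0 < / m) by (apply Rinv_0_lt_compat; lra).
  assert (HBQ : 0 < BQ) by (specialize (HQup 0 (Rle_refl 0)); specialize (HQ 0); lra).
  assert (HM0 : 0 <= M0).
  { unfold M0. pose proof (Rpower_pos b (/ m - 1)). pose proof (exp_pos B).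
    repeat apply Rmult_le_pos; nra. }
  exists (M0 + 1); split; [lra|]. intros t Ht.
  assert (Habs : Rabs (dproot t) <= M0); [|lra].
  specialize (HvB t Ht). apply Rabs_le_between in HvB.
  specialize (Hlow t Ht). specialize (HQup t Ht).
  assert (Hpw : Rpower (Q t) (/ m - 1) <= Rpower b (/ m - 1)).
  { apply Rpower_le_neg; [|lra].
    assert (/ m <= 1) by (rewrite <- Rinv_1; apply Rinv_le_contravar; lra). lra. }
  assert (Hdiff : Rabs (qstar * exp (v t) - Q t) <= qstar * exp B + BQ).
  { assert (exp (v t) <= exp B) by (apply exp_le; lra). pose proof (exp_pos (v t)).
    pose proof (HQ t). apply Rabs_le_between. split; nra. }
  unfold dproot, M0. rewrite !Rabs_mult, (Rabs_pos_eq (/ m)), (Rabs_pos_eq c),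
    (Rabs_pos_eq (Rpower _ _)) by (try apply Rlt_le, Rpower_pos; lra).
  pose proof (Rpower_pos (Q t) (/ m - 1)). pose proof (Rabs_pos (qstar * exp (v t) - Q t)).
  apply Rmult_le_compat.
  - apply Rmult_le_pos; lra.
  - apply Rmult_le_pos; lra.
  - apply Rmult_le_compat_l; lra.
  - apply Rmult_le_compat_l; lra.
Qed.

(* LaSalle-type step: [proot t -> th], by Barbalat's lemma applied to [lyap]. *)
Lemma proot_conv d : 0 < d -> exists T, 0 <= T /\ forall t, T <= t -> Rabs (proot t - th) < d.
Proof.
  intros Hd. destruct dissip_coercive as [k [Hk Hg]]. destruct dproot_bounded as [M [HM HdM]].
  destruct proot_bounded as [lo [hi [Hlo Hb]]].
  assert (Hhi : 0 < hi) by (specialize (Hb 0 (Rle_refl 0)); lra).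
  destruct (barbalat lyap (fun t => - c * dissip t) (fun t => (proot t - th) * (proot t - th))
     (fun t => 2 * (proot t - th) * dproot t) (c * k) (2 * (hi + th) * M))
     with (eps := d * d) as [T [HT HT']]; try nra.
  - apply lyap_nonneg.
  - intros; apply lyap_deriv.
  - intros t Ht. specialize (Hg t Ht). nra.
  - intros t. apply Rle_0_sqr.
  - intros t Ht. eapply D_ext.
    + apply D_mult; apply D_minus; (apply proot_deriv || apply D_const).
    + cbv beta; ring.
  - intros t Ht. specialize (Hb t Ht). specialize (HdM t Ht).
    rewrite !Rabs_mult, (Rabs_pos_eq 2) by lra.
    assert (Rabs (proot t - th) <= hi + th) by (apply Rabs_le_between; lra).
    pose proof (Rabs_pos (proot t - th)). pose proof (Rabs_pos (dproot t)).
    apply Rmult_le_compat; nra.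
  - exists T; split; auto. intros t Ht. specialize (HT' t Ht).
    rewrite <- (Rabs_pos_eq d) by lra. apply Rsqr_lt_abs_0. unfold Rsqr. exact HT'.
Qed.

Lemma Q_conv e : 0 < e -> exists T, 0 <= T /\ forall t, T <= t -> Rabs (Q t - qstar) < e.
Proof.
  intros He.
  destruct (cont_eps (fun x => Rpower x m) th (D_cont _ _ _ (D_rpow th m Hth)) e He)
    as [d [Hd Hd']].
  destruct (proot_conv d Hd) as [T [HT HT']]. exists T; split; auto.
  intros t Ht. rewrite <- proot_pow. apply Hd'. auto.
Qed.

(* If [lyap] stayed above some [L > 0], then, as [Q -> qstar] and [qpot(qstar) = 0],
   [v] would eventually stay away from [0]. *)
Lemma v_away_if_lyap_away L : 0 < L -> (forall t, 0 <= t -> L <= lyap t) ->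
  exists eta T, 0 < eta /\ forall t, T <= t -> eta <= Rabs (v t).
Proof.
  intros HL HLE. pose proof qstar_pos.
  destruct (cont_eps qpot qstar (D_cont _ _ _ (qpot_deriv qstar qstar_pos)) (L/2) ltac:(lra))
    as [dK [HdK HdK']].
  rewrite qpot_qstar in HdK'.
  assert (HFc : continuity_pt (fun x => c * qstar * (exp x - 1 - x)) 0).
  { apply (D_cont _ _ (c * qstar * (exp 0 - 0 - 1))).
    apply D_scal, D_minus; [apply D_minus; [apply D_exp|apply D_const]|apply D_id]. }
  destruct (cont_eps _ 0 HFc (L/2) ltac:(lra)) as [eta [Heta Heta']].
  rewrite exp_0 in Heta'.
  destruct (Q_conv dK HdK) as [T [HT HT']].
  exists eta, T. split; auto. intros t Ht. apply Rnot_lt_le; intros Hlt.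
  specialize (Heta' (v t) ltac:(rewrite Rminus_0_r; auto)).
  specialize (HdK' (Q t) (HT' t Ht)). specialize (HLE t ltac:(lra)).
  unfold lyap in HLE. apply Rabs_lt_between in Heta'. apply Rabs_lt_between in HdK'. lra.
Qed.

(* [v >= eta > 0] forever would force [Q' >= const > 0], so [Q] unbounded. *)
Lemma v_not_eventually_above eta T : 0 < eta -> ~ (forall t, T <= t -> eta <= v t).
Proof.
  intros Heta Hv_above. pose proof qstar_pos.
  destruct Q_bounded_above as [B HB].
  set (sg := qstar * (exp eta - 1) / 2).
  assert (Hsg : 0 < sg) by (unfold sg; pose proof (exp_ineq1 eta ltac:(lra)); nra).
  destruct (Q_conv sg Hsg) as [T2 [HT2 HT2']].
  pose proof (Rmax_l T T2). pose proof (Rmax_r T T2). set (T3 := Rmax T T2) in *.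
  set (s := Rabs B / (c * sg) + 1).
  assert (Hs : c * sg * s = Rabs B + c * sg) by (unfold s; field; nra).
  assert (Hs0 : 0 <= s) by (unfold s; pose proof (Rabs_pos B);
    assert (0 <= Rabs B / (c * sg)) by (apply Rdiv_le_0_compat; nra); lra).
  assert (Hgain : Q T3 + c * sg * s <= Q (T3 + s)).
  { apply (linear_gain Q (fun t => c * (qstar * exp (v t) - Q t))); auto.
    intros t Ht. apply Rmult_le_compat_l; [lra|].
    assert (exp eta <= exp (v t)) by (apply exp_le, Hv_above; lra).
    assert (qstar * exp eta <= qstar * exp (v t)) by (apply Rmult_le_compat_l; lra).
    specialize (HT2' t ltac:(lra)). apply Rabs_lt_between in HT2'.
    unfold sg in *. lra. }
  specialize (HB (T3 + s) ltac:(lra)). pose proof (HQ T3).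
  pose proof (Rle_abs B). assert (0 < c * sg) by nra. lra.
Qed.

(* [v <= - eta < 0] forever would force [Q' <= - const < 0], so [Q] turns negative. *)
Lemma v_not_eventually_below eta T : 0 < eta -> ~ (forall t, T <= t -> v t <= - eta).
Proof.
  intros Heta Hv_below. pose proof qstar_pos.
  destruct Q_bounded_above as [B HB].
  set (sg := qstar * (1 - exp (- eta)) / 2).
  assert (Hsg : 0 < sg).
  { unfold sg. pose proof (exp_increasing (- eta) 0 ltac:(lra)). rewrite exp_0 in H0. nra. }
  destruct (Q_conv sg Hsg) as [T2 [HT2 HT2']].
  pose proof (Rmax_l T T2). pose proof (Rmax_r T T2).
  pose proof (Rmax_l (Rmax T T2) 0). pose proof (Rmax_r (Rmax T T2) 0).
  set (T3 := Rmax (Rmax T T2) 0) in *.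
  set (s := Rabs B / (c * sg) + 1).
  assert (Hs : c * sg * s = Rabs B + c * sg) by (unfold s; field; nra).
  assert (Hs0 : 0 <= s) by (unfold s; pose proof (Rabs_pos B);
    assert (0 <= Rabs B / (c * sg)) by (apply Rdiv_le_0_compat; nra); lra).
  assert (Hloss : - Q T3 + c * sg * s <= - Q (T3 + s)).
  { apply (linear_gain (fun t => - Q t) (fun t => - (c * (qstar * exp (v t) - Q t)))); auto.
    - intros t _. apply D_opp, HQd.
    - intros t Ht.
      assert (exp (v t) <= exp (- eta)) by (apply exp_le, Hv_below; lra).
      specialize (HT2' t ltac:(lra)). apply Rabs_lt_between in HT2'.
      assert (qstar * exp (v t) - Q t <= - sg) by (unfold sg in *; nra). nra. }
  specialize (HB T3 ltac:(lra)). pose proof (HQ (T3 + s)).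
  pose proof (Rle_abs B). assert (0 < c * sg) by nra. lra.
Qed.

Lemma lyap_inf_zero e : 0 < e -> exists T, 0 <= T /\ lyap T < e.
Proof.
  intros He. destruct (inf_nonneg_fun lyap lyap_nonneg) as [L [HL0 [HL1 HL2]]].
  destruct (Rle_lt_or_eq_dec 0 L HL0) as [HLp|<-].
  - exfalso. destruct (v_away_if_lyap_away L HLp HL1) as [eta [T [Heta Haway]]].
    destruct (eventual_sign v T eta (fun t => v_cont t) Haway Heta) as [Habove|Hbelow].
    + exact (v_not_eventually_above eta T Heta Habove).
    + exact (v_not_eventually_below eta T Heta Hbelow).
  - destruct (HL2 e He) as [T [HT HT']]. exists T; split; auto; lra.
Qed.

Lemma v_conv d : 0 < d -> exists T, 0 <= T /\ forall t, T <= t -> Rabs (v t) < d.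
Proof.
  intros Hd. pose proof qstar_pos.
  set (e := c * qstar * Rmin (exp d - 1 - d) (exp (- d) - 1 - (- d))).
  assert (He : 0 < e).
  { unfold e. apply Rmult_lt_0_compat; [nra|].
    apply Rmin_case; pose proof (exp_ineq1 d ltac:(lra)); pose proof (exp_ineq1 (- d) ltac:(lra)); lra. }
  destruct (lyap_inf_zero e He) as [T [HT HT']]. exists T; split; auto.
  intros t Ht. apply Rnot_le_lt; intros Hb.
  pose proof (lyap_decr T t Ht). pose proof (qpot_nonneg _ (HQ t)).
  assert (HF : Rmin (exp d - 1 - d) (exp (- d) - 1 - (- d)) <= exp (v t) - 1 - v t).
  { destruct (Rle_dec 0 (v t)).
    - rewrite Rabs_right in Hb by lra. eapply Rle_trans; [apply Rmin_l|].
      apply (mono_le (fun x => exp x - 1 - x) (fun x => exp x - 0 - 1)); auto.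
      + intros x Hx; apply D_minus; [apply D_minus; [apply D_exp|apply D_const]|apply D_id].
      + intros x Hx. pose proof (exp_le 0 x ltac:(lra)). rewrite exp_0 in H2. lra.
    - rewrite Rabs_left in Hb by lra. eapply Rle_trans; [apply Rmin_r|].
      apply (anti_le (fun x => exp x - 1 - x) (fun x => exp x - 0 - 1)); try lra.
      + intros x Hx; apply D_minus; [apply D_minus; [apply D_exp|apply D_const]|apply D_id].
      + intros x Hx. pose proof (exp_le x 0 ltac:(lra)). rewrite exp_0 in H2. lra. }
  unfold lyap, e in *.
  assert (c * qstar * Rmin (exp d - 1 - d) (exp (- d) - 1 - - d)
          <= c * qstar * (exp (v t) - 1 - v t)) by (apply Rmult_le_compat_l; nra).
  lra.
Qed.

(** ** Oscillation about the equilibrium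
    Near [(0, qstar)] the slope [r = (th - proot) / v] satisfies a Riccati
    inequality [r' <= - eta0 (1 + r^2)] as long as [v] does not vanish, which
    cannot last for a time [PI / eta0]. *)

Hypothesis Hosc : c * m < 4 * th.

Definition Bcoef := c * th / m.
Definition eta0 := Rmin (1/2) ((4 * Bcoef - c * c) / (8 * Bcoef + 4 + 3 * (c * c))).

Lemma Bcoef_pos : 0 < Bcoef.
Proof. unfold Bcoef. apply Rdiv_lt_0_compat; nra. Qed.

(* [eta0] is admissible in [quadratic_nonneg] with [B = Bcoef]. *)
Lemma eta0_props : 0 < eta0 <= 1/2 /\ eta0 * (8 * Bcoef + 4 + 3 * (c * c)) <= 4 * Bcoef - c * c.
Proof.
  pose proof Bcoef_pos.
  assert (HD : 0 < 4 * Bcoef - c * c).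
  { unfold Bcoef. replace (4 * (c * th / m) - c * c) with (c * (4 * th - c * m) / m) by (field; lra).
    apply Rdiv_lt_0_compat; nra. }
  assert (Hden : 0 < 8 * Bcoef + 4 + 3 * (c * c)) by nra.
  unfold eta0. split; [split|].
  - apply Rmin_case; [lra|apply Rdiv_lt_0_compat; lra].
  - apply Rmin_l.
  - apply Rle_trans with ((4 * Bcoef - c * c) / (8 * Bcoef + 4 + 3 * (c * c)) * (8 * Bcoef + 4 + 3 * (c * c))).
    + apply Rmult_le_compat_r; [lra|apply Rmin_r].
    + right; field; lra.
Qed.

(* Distortion factors of the linearisation on the box [|v|, |proot - th| < d];
   both tend to [1] as [d -> 0]. *)
Definition distort1 d := Rpower (th - d) (1 - m) * Rpower (th + d) (m - 1).
Definition distort2 d := Rpower (th + d) (1 - m) * exp (- d) * (qstar / th).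

Lemma riccati_radius : exists d, 0 < d <= th / 2 /\ distort1 d <= 1 + eta0 /\ 1 - eta0 <= distort2 d.
Proof.
  destruct eta0_props as [[He0 _] _].
  assert (Hf1 : continuity_pt distort1 0).
  { unfold distort1. eapply D_cont. apply D_mult.
    - apply (D_comp (fun x => Rpower x (1 - m)) (fun y => th - y)); [apply D_rpow; lra|].
      apply D_minus; [apply D_const|apply D_id].
    - apply (D_comp (fun x => Rpower x (m - 1)) (fun y => th + y)); [apply D_rpow; lra|].
      apply D_plus; [apply D_const|apply D_id]. }
  assert (Hf2 : continuity_pt distort2 0).
  { unfold distort2. eapply D_cont.
    apply (D_mult (fun y => Rpower (th + y) (1 - m) * exp (- y)) (fun _ => qstar / th));
      [apply D_mult|apply D_const].
    - apply (D_comp (fun x => Rpower x (1 - m)) (fun y => th + y)); [apply D_rpow; lra|].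
      apply D_plus; [apply D_const|apply D_id].
    - apply (D_comp exp (fun y => - y)); [apply D_exp|apply (D_opp (fun y => y)), D_id]. }
  assert (Hf10 : distort1 0 = 1).
  { unfold distort1. rewrite Rminus_0_r, Rplus_0_r, <- Rpower_plus.
    replace (1 - m + (m - 1)) with 0 by ring. apply Rpower_O; lra. }
  assert (Hf20 : distort2 0 = 1).
  { unfold distort2, qstar. rewrite Rplus_0_r, Ropp_0, exp_0, Rmult_1_r.
    unfold Rdiv. rewrite <- Rmult_assoc, <- Rpower_plus.
    replace (1 - m + m) with 1 by ring. rewrite Rpower_1 by lra. field; lra. }
  destruct (cont_eps distort1 0 Hf1 eta0 He0) as [d1 [Hd1 Hd1']].
  destruct (cont_eps distort2 0 Hf2 eta0 He0) as [d2 [Hd2 Hd2']].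
  set (d := Rmin (Rmin (d1 / 2) (d2 / 2)) (th / 2)).
  assert (Hd : 0 < d) by (unfold d; repeat apply Rmin_case; lra).
  assert (d <= d1 / 2 /\ d <= d2 / 2 /\ d <= th / 2) as [Hdd1 [Hdd2 Hdth]].
  { unfold d. pose proof (Rmin_l (Rmin (d1 / 2) (d2 / 2)) (th / 2)).
    pose proof (Rmin_r (Rmin (d1 / 2) (d2 / 2)) (th / 2)).
    pose proof (Rmin_l (d1 / 2) (d2 / 2)). pose proof (Rmin_r (d1 / 2) (d2 / 2)). lra. }
  exists d. split; [lra|split].
  - specialize (Hd1' d ltac:(rewrite Rminus_0_r, Rabs_right; lra)).
    rewrite Hf10 in Hd1'. apply Rabs_lt_between in Hd1'. lra.
  - specialize (Hd2' d ltac:(rewrite Rminus_0_r, Rabs_right; lra)).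
    rewrite Hf20 in Hd2'. apply Rabs_lt_between in Hd2'. lra.
Qed.

Definition ratio t := (th - proot t) / v t.
Definition dratio t := ((0 - dproot t) * v t - (th - proot t) * (th - proot t)) / v t ^ 2.

Lemma ratio_deriv t : v t <> 0 -> is_derive ratio t (dratio t).
Proof.
  intros Hv0. apply (is_derive_div (fun s => th - proot s) v t); [|apply Hv|exact Hv0].
  apply D_minus; [apply D_const|apply proot_deriv].
Qed.

(* Exact Riccati form [r' = - (b + a r) - r^2], where the mean value theorem
   for [exp] and [x^m] pins the coefficients [a ~ c] and [b ~ Bcoef]. *)
Lemma ratio_riccati_form d t : 0 < d <= th / 2 -> v t <> 0 ->
  Rabs (v t) < d -> Rabs (proot t - th) < d ->
  exists a b, 0 <= a <= c * distort1 d /\ Bcoef * distort2 d <= b /\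
    dratio t = - (b + a * ratio t) - ratio t * ratio t.
Proof.
  intros Hd Hv0 Hvd HPd. apply Rabs_lt_between in Hvd. apply Rabs_lt_between in HPd.
  destruct (mvt2 exp exp 0 (v t)) as [z [Hz Hez]]; [intros; apply D_exp|].
  destruct (mvt2 (fun y => Rpower y m) (fun y => m * Rpower y (m - 1)) th (proot t))
    as [xi [Hxi Hexi]].
  { intros y Hy. apply D_rpow. assert (0 < Rmin th (proot t)) by (apply Rmin_case; lra). lra. }
  rewrite exp_0 in Hez.
  assert (Hz' : - d <= z) by (assert (Rmin 0 (v t) >= - d) by (apply Rmin_case; lra); lra).
  assert (Hxi1 : th - d <= xi) by (assert (Rmin th (proot t) >= th - d) by (apply Rmin_case; lra); lra).
  assert (Hxi2 : xi <= th + d) by (assert (Rmax th (proot t) <= th + d) by (apply Rmax_case; lra); lra).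
  set (pp := Rpower (proot t) (1 - m)). set (xx := Rpower xi (m - 1)). set (ez := exp z).
  assert (HQP : Rpower (Q t) (/ m - 1) = pp).
  { unfold pp. rewrite <- (proot_pow t), Rpower_mult. f_equal. field. lra. }
  assert (Hpp1 : pp <= Rpower (th - d) (1 - m)) by (apply Rpower_le_neg; lra).
  assert (Hpp2 : Rpower (th + d) (1 - m) <= pp) by (apply Rpower_le_neg; lra).
  assert (Hxx : xx <= Rpower (th + d) (m - 1)) by (apply Rle_Rpower_l; lra).
  assert (Hezb : exp (- d) <= ez) by (apply exp_le; lra).
  assert (Hpp : 0 < pp) by apply Rpower_pos. assert (Hxx0 : 0 < xx) by apply Rpower_pos.
  assert (Hez0 : 0 < ez) by apply exp_pos.
  pose proof qstar_pos. pose proof (Rpower_pos (th + d) (1 - m)).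
  exists (c * pp * xx), (c / m * pp * qstar * ez). split; [|split].
  - assert (0 < c * pp) by nra. split; [nra|].
    unfold distort1. rewrite <- Rmult_assoc. apply Rmult_le_compat; try lra.
    apply Rmult_le_compat_l; lra.
  - unfold Bcoef, distort2.
    replace (c * th / m * (Rpower (th + d) (1 - m) * exp (- d) * (qstar / th)))
      with (c / m * qstar * (Rpower (th + d) (1 - m) * exp (- d))) by (field; lra).
    replace (c / m * pp * qstar * ez) with (c / m * qstar * (pp * ez)) by ring.
    apply Rmult_le_compat_l; [apply Rmult_le_pos; [apply Rlt_le, Rdiv_lt_0_compat|]; lra|].
    apply Rmult_le_compat; try lra. apply Rlt_le, exp_pos.
  - assert (Hr : th - proot t = ratio t * v t) by (unfold ratio; field; auto).
    unfold dratio, dproot. rewrite HQP, <- (proot_pow t).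
    replace (qstar * exp (v t) - Rpower (proot t) m)
      with (qstar * (exp (v t) - 1) - (Rpower (proot t) m - qstar)) by ring.
    unfold qstar at 2. rewrite Hexi, Hez. fold ez xx.
    replace (proot t - th) with (- (th - proot t)) by ring. rewrite Hr. field. split; lra.
Qed.

Lemma ratio_riccati d t : 0 < d <= th / 2 -> distort1 d <= 1 + eta0 -> 1 - eta0 <= distort2 d ->
  v t <> 0 -> Rabs (v t) < d -> Rabs (proot t - th) < d ->
  dratio t <= - eta0 * (1 + ratio t * ratio t).
Proof.
  intros Hd Hf1 Hf2 Hv0 Hvd HPd.
  destruct (ratio_riccati_form d t Hd Hv0 Hvd HPd) as [a [b [Ha [Hb ->]]]].
  destruct eta0_props as [He1 He2]. pose proof Bcoef_pos.
  assert (a <= c * (1 + eta0)) by (apply Rle_trans with (c * distort1 d); [lra|apply Rmult_le_compat_l; lra]).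
  assert (Bcoef * (1 - eta0) <= b) by (apply Rle_trans with (Bcoef * distort2 d); [apply Rmult_le_compat_l; lra|lra]).
  pose proof (quadratic_nonneg Bcoef c eta0 a b (ratio t) Bcoef_pos Hc He1 He2 ltac:(lra) ltac:(lra)).
  nra.
Qed.

Lemma v_oscillates T : exists t, T < t /\ v t = 0.
Proof.
  apply NNPP; intros Hn.
  assert (Hnz : forall t, T < t -> v t <> 0) by (intros t Ht H0; apply Hn; exists t; auto).
  destruct eta0_props as [[He0 _] _].
  destruct riccati_radius as [d [Hd [Hf1 Hf2]]].
  destruct (v_conv d ltac:(lra)) as [Tv [_ HTv]].
  destruct (proot_conv d ltac:(lra)) as [TP [_ HTP]].
  set (T0 := Rmax (Rmax Tv TP) (T + 1)).
  assert (Tv <= T0 /\ TP <= T0 /\ T + 1 <= T0) as [H1 [H2 H3]].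
  { unfold T0. pose proof (Rmax_l (Rmax Tv TP) (T + 1)). pose proof (Rmax_r (Rmax Tv TP) (T + 1)).
    pose proof (Rmax_l Tv TP). pose proof (Rmax_r Tv TP). lra. }
  apply (riccati_no_long_interval ratio dratio eta0 T0 He0).
  intros t Ht. assert (v t <> 0) by (apply Hnz; lra). split.
  - now apply ratio_deriv.
  - apply (ratio_riccati d t); auto; [apply HTv|apply HTP]; lra.
Qed.

(** ** Zeros of [v] do not accumulate at finite times
    The equilibrium cannot be reached in finite time from a trajectory with
    [v < 0] near [-oo] (backward uniqueness), hence zeros of [v] are simple
    crossings and are isolated. *)

Lemma proot_lipschitz t : qstar / 2 < Q t ->
  Rabs (th - proot t) <= / m * Rpower (qstar / 2) (/ m - 1) * Rabs (Q t - qstar).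
Proof.
  intros HQt. pose proof qstar_pos.
  destruct (mvt2 (fun x => Rpower x (/m)) (fun x => / m * Rpower x (/ m - 1)) qstar (Q t))
    as [xi [Hxi Heq]].
  { intros x Hx. apply D_rpow. assert (Rmin qstar (Q t) > 0) by (apply Rmin_case; lra). lra. }
  rewrite qstar_root in Heq. fold (proot t) in Heq.
  replace (th - proot t) with (- (/ m * Rpower xi (/ m - 1) * (Q t - qstar))) by lra.
  assert (Hinv : 0 < / m) by (apply Rinv_0_lt_compat; lra).
  rewrite Rabs_Ropp, !Rabs_mult, (Rabs_pos_eq (/ m)), (Rabs_pos_eq (Rpower xi _))
    by (try apply Rlt_le, Rpower_pos; lra).
  apply Rmult_le_compat_r; [apply Rabs_pos|]. apply Rmult_le_compat_l; [lra|].
  apply Rpower_le_neg.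
  - assert (/ m <= 1) by (rewrite <- Rinv_1; apply Rinv_le_contravar; lra). lra.
  - assert (Rmin qstar (Q t) >= qstar / 2) by (apply Rmin_case; lra). lra.
Qed.

Lemma equilibrium_backward_unique u : v u = 0 -> Q u = qstar ->
  exists dl, 0 < dl /\ forall x, u - dl <= x <= u -> v x = 0 /\ Q x = qstar.
Proof.
  intros Hvu HQu. pose proof qstar_pos.
  destruct (cont_eps v u (v_cont u) 1 ltac:(lra)) as [d1 [Hd1 Hd1']].
  destruct (cont_eps Q u (Q_cont u) (qstar / 2) ltac:(lra)) as [d2 [Hd2 Hd2']].
  rewrite Hvu in Hd1'. rewrite HQu in Hd2'.
  set (dl := Rmin d1 d2 / 2).
  assert (Hdl : 0 < dl) by (unfold dl; apply Rmin_case; lra).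
  assert (Hloc : forall y, u - dl <= y <= u -> Rabs (v y) < 1 /\ qstar / 2 < Q y).
  { intros y Hy. pose proof (Rmin_l d1 d2). pose proof (Rmin_r d1 d2).
    specialize (Hd1' y ltac:(apply Rabs_lt_between; unfold dl in *; lra)).
    specialize (Hd2' y ltac:(apply Rabs_lt_between; unfold dl in *; lra)).
    rewrite Rminus_0_r in Hd1'. apply Rabs_lt_between in Hd2'. split; [auto|lra]. }
  set (L := / m * Rpower (qstar / 2) (/ m - 1)).
  assert (HL : 0 <= L).
  { unfold L. apply Rmult_le_pos; [apply Rlt_le, Rinv_0_lt_compat; lra|apply Rlt_le, Rpower_pos]. }
  set (G := fun y => v y * v y + (Q y - qstar) * (Q y - qstar)).
  assert (HG : forall x, u - dl <= x <= u -> G x = 0).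
  { apply (backward_gronwall G (fun y => 2 * v y * (th - proot y)
         + 2 * (Q y - qstar) * (c * (qstar * exp (v y) - Q y))) (L + 3 * c * qstar + 2 * c));
      [lra| | |].
    - intros y _. eapply D_ext.
      + apply D_plus; [apply D_mult; apply Hv|].
        apply D_mult; (apply D_minus; [apply HQd|apply D_const]).
      + cbv beta; ring.
    - intros y Hy. destruct (Hloc y Hy) as [Hvy HQy]. split.
      + unfold G. pose proof (Rle_0_sqr (v y)). pose proof (Rle_0_sqr (Q y - qstar)).
        unfold Rsqr in *. lra.
      + replace (qstar * exp (v y) - Q y) with (qstar * (exp (v y) - 1) - (Q y - qstar)) by ring.
        apply energy_estimate; auto; [apply proot_lipschitz|apply exp_sub1_bound]; auto.
    - unfold G. rewrite Hvu, HQu. ring. }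
  exists dl; split; auto. intros x Hx. specialize (HG x Hx). unfold G in HG.
  pose proof (Rle_0_sqr (v x)). pose proof (Rle_0_sqr (Q x - qstar)). unfold Rsqr in *.
  split; nra.
Qed.

Section NegativeNearMinusInfinity.

Variable t1 : R.
Hypothesis Ht1 : forall t, t <= t1 -> v t < 0.

(* The equilibrium is never attained: the maximal interval ending at [u] on
   which the trajectory sits at the equilibrium would be bounded below by
   [t1], yet open to the left by backward uniqueness. *)
Lemma equilibrium_never_attained u : v u = 0 -> Q u = qstar -> False.
Proof.
  intros Hvu HQu.
  set (S := fun x => x <= u /\ forall y, x <= y <= u -> v y = 0 /\ Q y = qstar).
  assert (Hlb : forall x, S x -> t1 <= x).
  { intros x [Hxu Hx]. apply Rnot_lt_le; intros Hlt. destruct (Hx x ltac:(lra)) as [H0 _].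
    specialize (Ht1 x ltac:(lra)). lra. }
  assert (Hu : S u) by (split; [lra|intros y Hy; replace y with u by lra; auto]).
  destruct (inf_exists S t1 u Hlb Hu) as [s [Hs1 Hs2]].
  assert (Hsu : s <= u) by (apply Hs1; auto).
  assert (Hright : forall y, s < y <= u -> v y = 0 /\ Q y = qstar).
  { intros y Hy. destruct (Hs2 (y - s) ltac:(lra)) as [x [[Hxu Hx] Hxy]]. apply Hx.
    pose proof (Hs1 x (conj Hxu Hx)). lra. }
  assert (Hvs : v s = 0).
  { apply (zero_at_left_end v s u Hsu (v_cont s)); auto. intros y Hy; apply Hright, Hy. }
  assert (HQs : Q s - qstar = 0).
  { apply (zero_at_left_end (fun x => Q x - qstar) s u Hsu).
    - apply (D_cont _ _ _ (D_minus Q (fun _ => qstar) s _ _ (HQd s) (D_const qstar s))).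
    - intros y Hy. rewrite (proj2 (Hright y Hy)). ring.
    - rewrite HQu. ring. }
  destruct (equilibrium_backward_unique s Hvs ltac:(lra)) as [dl [Hdl Hdl']].
  assert (S (s - dl)).
  { split; [lra|]. intros y Hy. destruct (Rle_dec y s); [apply Hdl'; lra|apply Hright; lra]. }
  specialize (Hs1 _ H). lra.
Qed.

(* Each zero of [v] is isolated: at a zero, [v' = th - proot <> 0]. *)
Lemma v_zeros_isolated s : exists d, 0 < d /\ forall x, Rabs (x - s) < d -> v x = 0 -> x = s.
Proof.
  destruct (Req_dec (v s) 0) as [Hvs|Hvs].
  - assert (HPs : proot s <> th).
    { intros HP'. apply (equilibrium_never_attained s Hvs). rewrite <- (proot_pow s), HP'. reflexivity. }
    assert (Hp : 0 < Rabs (th - proot s)) by (apply Rabs_pos_lt; lra).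
    destruct (cont_eps proot s (D_cont _ _ _ (proot_deriv s)) _ Hp) as [d [Hd Hd']].
    exists d; split; auto. intros x Hx Hvx. apply NNPP; intros Hne.
    destruct (mvt2 v (fun y => th - proot y) s x) as [xi [Hxi Heq]]; [intros; apply Hv|].
    rewrite Hvx, Hvs, Rminus_0_r in Heq.
    assert (Hxis : Rabs (xi - s) < d).
    { apply Rabs_lt_between in Hx. apply Rabs_lt_between.
      assert (Rmin s x > s - d) by (apply Rmin_case; lra).
      assert (Rmax s x < s + d) by (apply Rmax_case; lra). lra. }
    specialize (Hd' xi Hxis).
    assert (th - proot xi <> 0).
    { intros H0. replace (proot xi - proot s) with (th - proot s) in Hd' by lra. lra. }
    assert (x - s <> 0) by lra.
    symmetry in Heq. apply Rmult_integral in Heq. tauto.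
  - destruct (cont_eps v s (v_cont s) (Rabs (v s)) (Rabs_pos_lt _ Hvs)) as [d [Hd Hd']].
    exists d; split; auto. intros x Hx Hvx. specialize (Hd' x Hx).
    rewrite Hvx, Rminus_0_l, Rabs_Ropp in Hd'. lra.
Qed.

(* Hence [v] has only finitely many zeros on every half-line [(-oo, T]]:
   otherwise the infimum of the [T] for which this fails would be an
   accumulation point of zeros. *)
Lemma v_zeros_finite_below T : finite_set (fun x => x <= T /\ v x = 0).
Proof.
  apply NNPP; intros HT.
  set (A := fun s => ~ finite_set (fun x => x <= s /\ v x = 0)).
  assert (Hlb : forall s, A s -> t1 <= s).
  { intros s Hs. apply Rnot_lt_le; intros Hlt. apply Hs. exists nil.
    intros x [Hx Hvx]. specialize (Ht1 x ltac:(lra)). lra. }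
  destruct (inf_exists A t1 T Hlb HT) as [s [Hs1 Hs2]].
  destruct (v_zeros_isolated s) as [d [Hd Hd']].
  assert (Hz : finite_set (fun x => x <= s - d / 2 /\ v x = 0)).
  { apply NNPP; intros Hn. specialize (Hs1 _ Hn). lra. }
  destruct Hz as [l Hl].
  destruct (Hs2 (d / 2) ltac:(lra)) as [s' [Hs' Hs'lt]].
  apply Hs'. exists (s :: l). intros x [Hx Hvx].
  destruct (Rle_dec x (s - d / 2)).
  - right. apply Hl; auto.
  - left. symmetry. apply Hd'; auto. pose proof (Hs1 s' Hs'). apply Rabs_lt_between; lra.
Qed.

End NegativeNearMinusInfinity.

End PlanarSystem.

(** * From the radial equation to the planar system *)

Lemma slope_from_flux alpha beta r d f : beta >= 0 -> 0 < r -> 0 < f ->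
  f <= Rpower r alpha * (Rpower (Rabs d) beta * d) ->
  Rpower f (/ (beta + 1)) * Rpower r (- (alpha / (beta + 1))) <= d.
Proof.
  intros Hb Hr Hf Hle.
  assert (Hd : 0 < d).
  { apply Rnot_le_lt; intros Hd0. pose proof (Rpower_pos (Rabs d) beta).
    pose proof (Rpower_pos r alpha). assert (Rpower (Rabs d) beta * d <= 0) by nra. nra. }
  rewrite Rabs_pos_eq, <- Rpower_plus1 in Hle by lra.
  assert (H1 : Rpower f (/ (beta + 1)) <= Rpower (Rpower r alpha * Rpower d (beta + 1)) (/ (beta + 1))).
  { apply Rle_Rpower_l; [apply Rlt_le, Rinv_0_lt_compat; lra|lra]. }
  rewrite <- Rpower_mult_distr, Rpower_inv_pow, Rpower_mult in H1 by (try apply Rpower_pos; lra).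
  pose proof (Rpower_opp_mul r (alpha * / (beta + 1)) Hr) as Hinv.
  pose proof (Rpower_pos r (- (alpha / (beta + 1)))).
  apply Rmult_le_compat_r with (r := Rpower r (- (alpha / (beta + 1)))) in H1; [|lra].
  unfold Rdiv in *. replace d with (Rpower r (- (alpha * / (beta + 1))) * Rpower r (alpha * / (beta + 1)) * d)
    by (rewrite Hinv; ring).
  lra.
Qed.

Lemma unbounded_below_at_zero (f df : R -> R) k a r2 : 0 < k -> 1 < a -> 0 < r2 ->
  (forall r, 0 < r <= r2 -> is_derive f r (df r) /\ k * Rpower r (- a) <= df r) ->
  forall rr C, 0 < rr -> exists r, 0 < r <= rr /\ f r < C.
Proof.
  intros Hk Ha Hr2 Hd rr C Hrr.
  set (h := fun r => f r + k / (a - 1) * Rpower r (1 - a)).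
  assert (Hh : forall r, 0 < r <= r2 -> h r <= h r2).
  { intros r Hr. apply (mono_le h (fun x => df x + k / (a - 1) * ((1 - a) * Rpower x (1 - a - 1))));
      [lra| |].
    - intros x Hx. apply D_plus; [apply Hd; lra|apply D_scal, D_rpow; lra].
    - intros x Hx. replace (1 - a - 1) with (- a) by ring.
      replace (k / (a - 1) * ((1 - a) * Rpower x (- a))) with (- (k * Rpower x (- a))) by (field; lra).
      destruct (Hd x ltac:(lra)) as [_ Hx']. lra. }
  pose proof (Rmin_l rr r2). pose proof (Rmin_r rr r2).
  set (r1 := Rmin rr r2) in *. assert (Hr1 : 0 < r1) by (apply Rmin_case; lra).
  set (N := Rabs (ln r1) + Rabs (h r2 - C) / k).
  assert (HN : Rabs (h r2 - C) <= k * N).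
  { unfold N. assert (k * (Rabs (h r2 - C) / k) = Rabs (h r2 - C)) by (field; lra).
    pose proof (Rabs_pos (ln r1)). nra. }
  set (r := exp (- N)).
  assert (Hr : 0 < r <= r1).
  { split; [apply exp_pos|]. unfold r. rewrite <- (exp_ln r1 Hr1). apply exp_le. unfold N.
    pose proof (Rle_abs (- ln r1)) as Hl. rewrite Rabs_Ropp in Hl.
    assert (0 <= Rabs (h r2 - C) / k) by (apply Rdiv_le_0_compat; [apply Rabs_pos|lra]). lra. }
  exists r; split; [lra|].
  specialize (Hh r ltac:(lra)). unfold h in Hh.
  assert (Hpow : 1 + (a - 1) * N <= Rpower r (1 - a)).
  { unfold r. rewrite Rpower_exp. replace ((1 - a) * - N) with ((a - 1) * N) by ring.
    apply exp_ineq1_le. }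
  assert (k / (a - 1) * (1 + (a - 1) * N) <= k / (a - 1) * Rpower r (1 - a))
    by (apply Rmult_le_compat_l; [apply Rlt_le, Rdiv_lt_0_compat|]; lra).
  assert (k / (a - 1) * (1 + (a - 1) * N) = k / (a - 1) + k * N) by (field; lra).
  assert (0 < k / (a - 1)) by (apply Rdiv_lt_0_compat; lra).
  pose proof (Rle_abs (h r2 - C)). unfold h in *. lra.
Qed.

Lemma bounded_near_zero (w : R -> R) :
  filterlim (fun h => (w h - w 0) / h) (at_right 0) (locally 0) ->
  exists r1, 0 < r1 /\ forall r, 0 < r <= r1 -> w 0 - 1 < w r < w 0 + 1.
Proof.
  intros H.
  destruct (proj1 (@filterlim_locally _ _ (at_right 0) _ _ 0) H (mkposreal 1 Rlt_0_1))
    as [e He].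
  exists (Rmin (e / 2) 1). split; [apply Rmin_case; pose proof (cond_pos e); lra|].
  intros r Hr. pose proof (Rmin_l (e / 2) 1). pose proof (Rmin_r (e / 2) 1).
  assert (Hb : ball 0 e r) by (apply Rabs_lt_between'; simpl; pose proof (cond_pos e); lra).
  specialize (He r Hb ltac:(simpl; lra)).
  change (ball 0 1 ((w r - w 0) / r)) in He. apply Rabs_lt_between' in He. simpl in He.
  assert (Hq : (w r - w 0) / r * r = w r - w 0) by (field; lra).
  assert (- 1 * r < (w r - w 0) / r * r < 1 * r) by (split; apply Rmult_lt_compat_r; lra).
  lra.
Qed.

(** Emden-Fowler change of variables. For a solution [w] put
      v(t) = w(e^t) - w*(e^t),   Q(t) = - (flux of w)(e^t) e^(-(alpha-beta-1) t).
    Then [(v, Q)] solves the planar system with [th = theta], [m = beta + 1]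
    and [c = alpha - beta - 1], and zeros of [w - w*] correspond to zeros of [v]. *)

Section RadialSolution.

Variables alpha beta gamma rho : R.
Variable w : R -> R.
Hypothesis Hab : alpha > beta + 1.
Hypothesis Hb : beta >= 0.
Hypothesis Hth : theta alpha beta gamma > 0.
Hypothesis Hsol : is_solution alpha beta gamma rho w.

Let th := theta alpha beta gamma.
Let fl := flux alpha beta w.

Lemma w_deriv r : 0 < r -> is_derive w r (Derive w r).
Proof. intros Hr. destruct Hsol as [_ [_ [Hd _]]]. apply Derive_correct, Hd, Hr. Qed.

Lemma flux_deriv r : 0 < r -> is_derive fl r (- exp (w r) * Rpower r gamma).
Proof.
  intros Hr. destruct Hsol as [_ [_ [_ Hfl]]]. destruct (Hfl r Hr) as [Hex Heq].
  apply Derive_correct in Hex. eapply D_ext; [exact Hex|].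
  pose proof (Rpower_opp_mul r gamma Hr) as H1. fold fl in Heq |- *.
  assert (HD : - exp (w r) = Rpower r (- gamma) * Derive fl r) by lra.
  rewrite HD. transitivity (Derive fl r * (Rpower r (- gamma) * Rpower r gamma));
    [rewrite H1|]; ring.
Qed.

Lemma flux_decreasing a b : 0 < a -> a <= b -> fl b <= fl a.
Proof.
  intros Ha Hab'. apply (anti_le fl (fun r => - exp (w r) * Rpower r gamma)); auto.
  - intros x Hx. apply flux_deriv. lra.
  - intros x Hx. pose proof (exp_pos (w x)). pose proof (Rpower_pos x gamma). nra.
Qed.

Lemma flux_strictly_decreasing a b : 0 < a -> a < b -> fl b < fl a.
Proof.
  intros Ha Hab'.
  assert (- fl a < - fl b); [|lra].
  apply (mono_lt (fun r => - fl r) (fun r => - (- exp (w r) * Rpower r gamma))); auto.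
  - intros x Hx. apply D_opp, flux_deriv. lra.
  - intros x Hx. pose proof (exp_pos (w x)). pose proof (Rpower_pos x gamma). nra.
Qed.

(* The flux is negative: otherwise it would be positive near [0], making
   [w' >= k r^(-alpha/(beta+1))] there and [w] unbounded below at [0+],
   while [w] is bounded near [0] since [w'(0) = 0]. *)
Lemma flux_neg r0 : 0 < r0 -> fl r0 < 0.
Proof.
  intros Hr0. apply Rnot_le_lt; intros Hge.
  destruct Hsol as [Hw0 [Hlim _]].
  destruct (bounded_near_zero w Hlim) as [r1 [Hr1 Hr1']]. rewrite Hw0 in Hr1'.
  set (r2 := r0 / 2).
  assert (Hf1 : 0 < fl r2) by (pose proof (flux_strictly_decreasing r2 r0 ltac:(unfold r2; lra) ltac:(unfold r2; lra)); lra).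
  assert (Ha : 1 < alpha / (beta + 1)).
  { apply Rmult_lt_reg_r with (beta + 1); [lra|].
    unfold Rdiv. rewrite Rmult_assoc, Rinv_l by lra. lra. }
  destruct (unbounded_below_at_zero w (Derive w) (Rpower (fl r2) (/ (beta + 1)))
      (alpha / (beta + 1)) r2 (Rpower_pos _ _) Ha ltac:(unfold r2; lra))
    with (rr := r1) (C := rho - 1) as [r [Hr Hwr]]; auto.
  - intros r Hr. split; [apply w_deriv; lra|].
    apply (slope_from_flux alpha beta r); auto; [lra|].
    apply (flux_decreasing r r2); lra.
  - specialize (Hr1' r Hr). lra.
Qed.

Definition vsol t := w (exp t) - wstar alpha beta gamma (exp t).
Definition Qsol t := - flux alpha beta w (exp t) * exp (- (alpha - beta - 1) * t).

Lemma vsol_formula t : vsol t = w (exp t) - ln (Rpower th (beta + 1) * (alpha - beta - 1)) + th * t.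
Proof. unfold vsol, wstar. rewrite ln_exp. fold th. ring. Qed.

Lemma Qsol_pos t : 0 < Qsol t.
Proof.
  unfold Qsol. pose proof (flux_neg (exp t) (exp_pos t)).
  pose proof (exp_pos (- (alpha - beta - 1) * t)). fold fl. nra.
Qed.

Lemma proot_Qsol t : proot (beta + 1) Qsol t = - exp t * Derive w (exp t).
Proof.
  unfold proot. set (r := exp t). set (d := Derive w r).
  pose proof (exp_pos t) as Hr. fold r in Hr.
  pose proof (flux_neg r Hr) as Hneg. unfold fl, flux in Hneg. fold d in Hneg.
  assert (Hd : d < 0).
  { apply Rnot_le_lt; intros Hd0. pose proof (Rpower_pos (Rabs d) beta).
    pose proof (Rpower_pos r alpha). assert (0 <= Rpower (Rabs d) beta * d) by nra. nra. }
  assert (HQ : Qsol t = Rpower r (beta + 1) * Rpower (- d) (beta + 1)).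
  { assert (Hexp : Rpower r (beta + 1) = Rpower r alpha * exp (- (alpha - beta - 1) * t))
      by (unfold r; rewrite !Rpower_exp, <- exp_plus; f_equal; ring).
    unfold Qsol, flux. fold r d. rewrite Hexp, Rabs_left, (Rpower_plus1 (- d)) by lra. ring. }
  rewrite HQ, Rpower_mult_distr, Rpower_inv_pow by nra. ring.
Qed.

Lemma vsol_deriv t : is_derive vsol t (th - proot (beta + 1) Qsol t).
Proof.
  rewrite proot_Qsol. eapply is_derive_ext; [intros s; symmetry; apply vsol_formula|].
  eapply D_ext.
  - apply D_plus; [apply D_minus; [|apply D_const]|apply D_scal, D_id].
    apply (D_comp w exp); [apply w_deriv, exp_pos|apply D_exp].
  - ring.
Qed.

Lemma Qsol_deriv t :
  is_derive Qsol t ((alpha - beta - 1) * (qstar th (beta + 1) * exp (vsol t) - Qsol t)).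
Proof.
  set (cc := alpha - beta - 1). set (A := Rpower th (beta + 1) * cc).
  assert (HA : 0 < A) by (apply Rmult_lt_0_compat; [apply Rpower_pos|unfold cc; lra]).
  unfold Qsol. fold cc. eapply D_ext.
  - apply (D_mult (fun t => - fl (exp t))).
    + apply D_opp, (D_comp fl exp); [apply flux_deriv, exp_pos|apply D_exp].
    + apply (D_comp exp (fun t => - cc * t)); [apply D_exp|apply D_scal, D_id].
  - rewrite vsol_formula. fold cc A.
    replace (exp (w (exp t) - ln A + th * t)) with (exp (w (exp t)) * / A * exp (th * t))
      by (rewrite exp_plus; unfold Rminus; rewrite exp_plus, exp_Ropp, exp_ln by auto; ring).
    assert (Hq : cc * qstar th (beta + 1) = A) by (unfold qstar, A; ring).
    assert (He : exp (th * t) = exp t * exp (gamma * t) * exp (- cc * t))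
      by (rewrite <- !exp_plus; f_equal; unfold th, theta, cc; ring).
    assert (Hcc : 0 < cc) by (unfold cc; lra).
    rewrite Rpower_exp, He.
    replace (qstar th (beta + 1)) with (A / cc) by (rewrite <- Hq; field; lra).
    fold fl. field. lra.
Qed.

(* Near [t = -oo], i.e. [r -> 0+], [w] stays bounded while [w*] blows up. *)
Lemma vsol_negative_near_minus_infinity : exists t1, forall t, t <= t1 -> vsol t < 0.
Proof.
  assert (Hth' : 0 < th) by exact Hth.
  destruct Hsol as [Hw0 [Hlim _]].
  destruct (bounded_near_zero w Hlim) as [r1 [Hr1 Hr1']]. rewrite Hw0 in Hr1'.
  set (A := Rpower th (beta + 1) * (alpha - beta - 1)).
  exists (Rmin (ln r1) ((ln A - rho - 1) / th - 1)).
  intros t Ht. pose proof (Rmin_l (ln r1) ((ln A - rho - 1) / th - 1)).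
  pose proof (Rmin_r (ln r1) ((ln A - rho - 1) / th - 1)).
  assert (exp t <= r1) by (rewrite <- (exp_ln r1 Hr1); apply exp_le; lra).
  specialize (Hr1' (exp t) ltac:(split; [apply exp_pos|auto])).
  assert (th * t <= ln A - rho - 1 - th).
  { assert (Hle : th * t <= th * ((ln A - rho - 1) / th - 1)) by (apply Rmult_le_compat_l; lra).
    replace (th * ((ln A - rho - 1) / th - 1)) with (ln A - rho - 1 - th) in Hle by (field; lra).
    lra. }
  rewrite vsol_formula. fold A. lra.
Qed.

Lemma zero_correspondence s : 0 < s -> (w s = wstar alpha beta gamma s <-> vsol (ln s) = 0).
Proof. intros Hs. unfold vsol. rewrite exp_ln by auto. lra. Qed.

End RadialSolution.

(** * Zeros of [w - w*] *)

Lemma list_upper_bound (l : list R) : exists M, forall x, In x l -> x <= M.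
Proof.
  induction l as [|a l [M HM]]; [exists 0; intros x []|].
  exists (Rmax a M). intros x [<-|Hx]; [apply Rmax_l|].
  eapply Rle_trans; [apply HM, Hx|apply Rmax_r].
Qed.

Lemma unbounded_not_finite (P : R -> Prop) : (forall M, exists s, M < s /\ P s) -> ~ finite_set P.
Proof.
  intros Hunb [l Hl]. destruct (list_upper_bound l) as [M HM].
  destruct (Hunb M) as [s [Hs HPs]]. specialize (HM s (Hl s HPs)). lra.
Qed.

Lemma finite_set_subset (P P' : R -> Prop) : (forall s, P s -> P' s) ->
  finite_set P' -> finite_set P.
Proof. intros Hsub [l Hl]. exists l. auto. Qed.

Section Zeros.

Variables alpha beta gamma rho : R.
Variable w : R -> R.
Hypothesis Hab : alpha > beta + 1.
Hypothesis Hb : beta >= 0.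
Hypothesis Hth : theta alpha beta gamma > 0.
Hypothesis Hosc : alpha - beta - 1 < 4 * theta alpha beta gamma / (beta + 1).
Hypothesis Hsol : is_solution alpha beta gamma rho w.

Let HQpos := Qsol_pos alpha beta gamma rho w Hab Hb Hsol.
Let Hvder := vsol_deriv alpha beta gamma rho w Hab Hb Hsol.
Let HQder := Qsol_deriv alpha beta gamma rho w Hab Hsol.

Lemma zeros_unbounded Rr : 0 < Rr ->
  ~ finite_set (fun s => Rr < s /\ w s = wstar alpha beta gamma s).
Proof.
  intros HRr. apply unbounded_not_finite. intros M.
  assert (Hcm : (alpha - beta - 1) * (beta + 1) < 4 * theta alpha beta gamma).
  { apply Rmult_lt_compat_r with (r := beta + 1) in Hosc; [|lra].
    unfold Rdiv in Hosc. rewrite Rmult_assoc, Rinv_l, Rmult_1_r in Hosc by lra. exact Hosc. }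
  destruct (v_oscillates (theta alpha beta gamma) (alpha - beta - 1) (beta + 1)
    ltac:(lra) ltac:(lra) ltac:(lra) _ _ HQpos Hvder HQder Hcm (ln (Rmax Rr M)))
    as [t [Ht Hvt]].
  assert (HRM : 0 < Rmax Rr M) by (pose proof (Rmax_l Rr M); lra).
  exists (exp t). pose proof (Rmax_l Rr M). pose proof (Rmax_r Rr M).
  assert (Rmax Rr M < exp t) by (rewrite <- (exp_ln _ HRM); apply exp_increasing; auto).
  split; [lra|split; [lra|]].
  apply zero_correspondence; [apply exp_pos|]. now rewrite ln_exp.
Qed.

(* Zeros of [vsol] are isolated and absent near [-oo], so finitely many
   lie in [(-oo, ln Rr]]. *)
Lemma zeros_bounded_finite Rr : 0 < Rr ->
  finite_set (fun s => 0 < s <= Rr /\ w s = wstar alpha beta gamma s).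
Proof.
  intros HRr.
  destruct (vsol_negative_near_minus_infinity alpha beta gamma rho w Hth Hsol) as [t1 Ht1].
  destruct (v_zeros_finite_below (theta alpha beta gamma) (alpha - beta - 1) (beta + 1)
    ltac:(lra) ltac:(lra) ltac:(lra) _ _ HQpos Hvder HQder t1 Ht1 (ln Rr)) as [l Hl].
  exists (map exp l). intros s [[Hs0 HsR] Hws].
  apply zero_correspondence in Hws; auto.
  rewrite <- (exp_ln s Hs0). apply in_map, Hl. split; auto. apply ln_le; auto.
Qed.

End Zeros.

Theorem theorem4p1 (alpha beta gamma rho : R) (w : R -> R) :
  alpha > beta + 1 ->
  beta >= 0 ->
  theta alpha beta gamma > 0 ->
  alpha - beta - 1 < 4 * theta alpha beta gamma / (beta + 1) ->
  is_solution alpha beta gamma rho w ->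
  (forall Rr : R, 0 < Rr ->
     ~ finite_set (fun s => Rr < s /\ w s = wstar alpha beta gamma s) /\
     finite_set (fun s => 0 < s <= Rr /\ w s = wstar alpha beta gamma s)) /\
  ~ finite_set (fun s => 0 < s /\ w s = wstar alpha beta gamma s).
Proof.
  intros Hab Hb Hth Hosc Hsol. split.
  - intros Rr HRr. split.
    + exact (zeros_unbounded alpha beta gamma rho w Hab Hb Hth Hosc Hsol Rr HRr).
    + exact (zeros_bounded_finite alpha beta gamma rho w Hab Hb Hth Hsol Rr HRr).
  - intros Hfin. apply (zeros_unbounded alpha beta gamma rho w Hab Hb Hth Hosc Hsol 1 Rlt_0_1).
    apply (finite_set_subset _ _ (fun s Hs => conj (Rlt_trans 0 1 s Rlt_0_1 (proj1 Hs)) (proj2 Hs))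
      Hfin).
Qed.
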